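(* Let $\mathcal{W}_a$ be a finite set of assignment vectors in $\{0,1\}^n$, each with exactly $n_t$ ones (and $n_c=n-n_t\ge 1$ zeros, $n_t\ge 1$), and let $W^{\mathrm{obs}}\in\mathcal{W}_a$ be the observed assignment with observed outcomes $Y_i$ (so $Y_i=Y_i(1)$ if $W^{\mathrm{obs}}_i=1$ and $Y_i=Y_i(0)$ if $W^{\mathrm{obs}}_i=0$). For $\theta\in\mathbb{R}$ define the imputed outcomes under $H_0^\theta: Y_i(1)-Y_i(0)=\theta$ for all $i$ by $\widetilde Y_i(1)=Y_i,\ \widetilde Y_i(0)=Y_i-\theta$ if $W^{\mathrm{obs}}_i=1$ and $\widetilde Y_i(0)=Y_i,\ \widetilde Y_i(1)=Y_i+\theta$ if $W^{\mathrm{obs}}_i=0$, and for $w\in\mathcal{W}_a$ let $\widehat\tau(\mathbf{Y}^{\mathrm{imp}}_\theta,w)=n_t^{-1}\sum_{i:w_i=1}\widetilde Y_i(1)-n_c^{-1}\sum_{i:w_i=0}\widetilde Y_i(0)$. Let $p(\theta)=|\mathcal{W}_a|^{-1}\sum_{w\in\mathcal{W}_a}I\{\widehat\tau(\mathbf{Y}^{\mathrm{imp}}_\theta,w)\ge \widehat\tau(\mathbf{Y}^{\mathrm{imp}}_\theta,W^{\mathrm{obs}})\}$ and $\theta_l=\sup\{\theta:p(\theta)\le\alpha\}$ for a fixed $\alpha\in(0,1)$ (with $\sup\emptyset=-\infty$). Then: (a) for every $W^b\in\mathcal{W}_a$ with $W^b\ne W^{\mathrm{obs}}$, the equation $\widehat\tau(\mathbf{Y}^{\mathrm{imp}}_\theta,W^b)=\widehat\tau(\mathbf{Y}^{\mathrm{imp}}_\theta,W^{\mathrm{obs}})$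 in $\theta$ has the unique solution $$\theta_b=\frac{\sum_{i:W^{\mathrm{obs}}_i=1,W^b_i=0}Y_i(1)-\sum_{i:W^{\mathrm{obs}}_i=0,W^b_i=1}Y_i(0)}{\sum_{i=1}^n I\{W^{\mathrm{obs}}_i=1,W^b_i=0\}};$$ (b) setting $\theta_b=-\infty$ for $W^b=W^{\mathrm{obs}}$ and letting $\theta_{(1)}\le\cdots\le\theta_{(|\mathcal{W}_a|)}$ be the increasingly ordered values of $\theta_b$ over $W^b\in\mathcal{W}_a$, we have $\theta_l=\theta_{(\lfloor\alpha|\mathcal{W}_a|\rfloor+1)}$.
   Context: Potential outcomes framework: units $i=1,\dots,n$ have fixed potential outcomes $Y_i(1),Y_i(0)$; an assignment $W\in\{0,1\}^n$ has $W_i=1$ for treatment. $I\{\cdot\}$ denotes the indicator function and $\lfloor\cdot\rfloor$ the floor function. *)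

From HB Require Import structures.
From mathcomp Require Import all_boot all_order all_algebra.
From mathcomp Require Import boolp classical_sets reals constructive_ereal ereal.
Set Implicit Arguments. Unset Strict Implicit. Unset Printing Implicit Defensive.
Import Order.TTheory GRing.Theory Num.Theory.
Local Open Scope ring_scope.
Local Open Scope classical_set_scope.

(* An assignment vector W in {0,1}^n: W i = true means unit i is treated. *)

Definition n_ones (n : nat) (w : {ffun 'I_n -> bool}) : nat := #|[set i | w i]|.

Definition Yobs (R : realType) (n : nat) (Y1 Y0 : 'I_n -> R)
  (Wobs : {ffun 'I_n -> bool}) (i : 'I_n) : R :=
  if Wobs i then Y1 i else Y0 i.

Definition Yimp1 (R : realType) (n : nat) (Y : 'I_n -> R)
  (Wobs : {ffun 'I_n -> bool}) (theta : R) (i : 'I_n) : R :=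
  if Wobs i then Y i else Y i + theta.
Definition Yimp0 (R : realType) (n : nat) (Y : 'I_n -> R)
  (Wobs : {ffun 'I_n -> bool}) (theta : R) (i : 'I_n) : R :=
  if Wobs i then Y i - theta else Y i.

Definition tau_hat (R : realType) (n nt : nat) (Y : 'I_n -> R)
  (Wobs : {ffun 'I_n -> bool}) (theta : R) (w : {ffun 'I_n -> bool}) : R :=
  (nt%:R)^-1 * (\sum_(i | w i) Yimp1 Y Wobs theta i)
  - ((n - nt)%:R)^-1 * (\sum_(i | ~~ w i) Yimp0 Y Wobs theta i).

Definition pval (R : realType) (n nt : nat) (Y : 'I_n -> R)
  (Wobs : {ffun 'I_n -> bool}) (Wa : {set {ffun 'I_n -> bool}}) (theta : R) : R :=
  #|[set w in Wa | tau_hat nt Y Wobs theta Wobs <= tau_hat nt Y Wobs theta w]|%:R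
  / #|Wa|%:R.

(* theta_l = sup {theta : p(theta) <= alpha} in the extended reals
   (ereal_sup of the empty set is -oo) *)
Definition theta_l (R : realType) (n nt : nat) (Y : 'I_n -> R)
  (Wobs : {ffun 'I_n -> bool}) (Wa : {set {ffun 'I_n -> bool}}) (alpha : R)
  : \bar R :=
  ereal_sup [set theta%:E | theta in [set theta : R | pval nt Y Wobs Wa theta <= alpha]].

Definition theta_b (R : realType) (n : nat) (Y1 Y0 : 'I_n -> R)
  (Wobs Wb : {ffun 'I_n -> bool}) : R :=
  ((\sum_(i | Wobs i && ~~ Wb i) Y1 i) - (\sum_(i | ~~ Wobs i && Wb i) Y0 i))
  / (\sum_i ((Wobs i && ~~ Wb i) : nat)%:R).

Definition theta_b_ext (R : realType) (n : nat) (Y1 Y0 : 'I_n -> R)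
  (Wobs Wb : {ffun 'I_n -> bool}) : \bar R :=
  if Wb == Wobs then -oo%E else (theta_b Y1 Y0 Wobs Wb)%:E.

(* theta_(k+1): the (k+1)-th smallest (0-based index k) of the theta_b, Wb in Wa,
   counted with multiplicity *)
Definition theta_order (R : realType) (n : nat) (Y1 Y0 : 'I_n -> R)
  (Wobs : {ffun 'I_n -> bool}) (Wa : {set {ffun 'I_n -> bool}}) (k : nat)
  : \bar R :=
  nth -oo%E (sort (fun x y : \bar R => (x <= y)%E)
                  [seq theta_b_ext Y1 Y0 Wobs w | w <- enum Wa]) k.

From HB Require Import structures.
From mathcomp Require Import all_boot all_order all_algebra.
From mathcomp Require Import boolp classical_sets reals constructive_ereal ereal.
From mathcomp Require Import ring lra.
Set Implicit Arguments. Unset Strict Implicit. Unset Printing Implicit Defensive.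
Import Order.TTheory GRing.Theory Num.Theory.
Local Open Scope ring_scope.

(* Fix the observed assignment O and another assignment w with the
   same number nt of treated units.  Expanding the imputed outcomes unit by unit,
   tau_hat(theta, w) - tau_hat(theta, O) is an affine function of theta with
   slope (1/nt + 1/nc) * m, where m > 0 counts the units treated under O but not
   under w (for w <> O), and it vanishes exactly at theta = theta_b(w).  Hence
   (a) holds, and the test event tau_hat(theta, w) >= tau_hat(theta, O) is the
   event theta_b(w) <= theta (trivially true for w = O, where theta_b = -oo).
   The p-value is therefore the proportion of the theta_b that are <= theta, so
   p(theta) <= alpha iff at most floor(alpha |Wa|) of them are <= theta, i.e. iff
   theta is strictly below the order statistic theta_(floor(alpha |Wa|) + 1).
   The supremum of the reals strictly below a finite or -oo extended real is
   that value itself, which gives (b). *)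

Definition n_moved_out (n : nat) (O w : {ffun 'I_n -> bool}) : nat :=
  \sum_i ((O i && ~~ w i) : nat).

Lemma n_ones_sum (n : nat) (w : {ffun 'I_n -> bool}) :
  n_ones w = (\sum_i (w i : nat))%N.
Proof.
rewrite /n_ones -sum1_card big_mkcond /=; apply: eq_bigr => i _.
by rewrite /in_mem /= /in_set /mkset asboolb; case: (w i).
Qed.

Lemma n_moved_out_sym (n : nat) (w O : {ffun 'I_n -> bool}) :
  n_ones w = n_ones O -> n_moved_out w O = n_moved_out O w.
Proof.
move=> eq_ones; apply/(@addnI (n_ones O)).
rewrite -[in RHS]eq_ones !n_ones_sum /n_moved_out -!big_split; apply: eq_bigr => i _ /=.
by case: (w i); case: (O i).
Qed.

Lemma n_moved_out_gt0 (n : nat) (O w : {ffun 'I_n -> bool}) :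
  n_ones w = n_ones O -> w != O -> (0 < n_moved_out O w)%N.
Proof.
move=> eq_ones; apply: contraNT; rewrite -eqn0Ngt => out0.
have in0 : n_moved_out w O == 0%N by rewrite n_moved_out_sym.
apply/eqP/ffunP => i; move: out0 in0; rewrite !sum_nat_eq0.
move=> /forallP/(_ i) + /forallP/(_ i).
by case: (w i); case: (O i).
Qed.

Lemma card_set_count (T : finType) (A : {set T}) (P : pred T) :
  #|[set w in A | P w]| = count P (enum A).
Proof. by rewrite -sum1_count big_enum_cond -sum1_card; apply: eq_bigl => x; rewrite inE. Qed.

Section Statistic.

Variables (R : realType) (n nt : nat) (Y1 Y0 : 'I_n -> R).
Variable O : {ffun 'I_n -> bool}.

Let Y := Yobs Y1 Y0 O.
Let tau (theta : R) (w : {ffun 'I_n -> bool}) : R := tau_hat nt Y O theta w.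

(* The weight 1/nt + 1/nc of the slope of tau_hat in theta. *)
Let c : R := (nt%:R)^-1 + ((n - nt)%:R)^-1.

Lemma tau_hat_unitwise theta w :
  tau theta w = \sum_i ((nt%:R)^-1 * (if w i then Yimp1 Y O theta i else 0)
                        - ((n - nt)%:R)^-1 * (if ~~ w i then Yimp0 Y O theta i else 0)).
Proof. by rewrite /tau /tau_hat sumrB -!mulr_sumr -!big_mkcond. Qed.

(* The difference of the statistics is affine in theta; the terms in which a
   unit moves into treatment cancel against those in which one moves out. *)
Lemma tau_hat_diff theta w :
  n_ones w = n_ones O ->
  tau theta w - tau theta O
  = c * ((n_moved_out O w)%:R * theta
         - ((\sum_(i | O i && ~~ w i) Y1 i) - (\sum_(i | ~~ O i && w i) Y0 i))).
Proof.
move=> eq_ones; rewrite !tau_hat_unitwise -sumrB.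
set ti := (nt%:R)^-1 : R; set tc := ((n - nt)%:R)^-1 : R.
transitivity (\sum_i (c * ((((O i && ~~ w i) : nat)%:R : R) * theta
     - ((if O i && ~~ w i then Y1 i else 0) - (if ~~ O i && w i then Y0 i else 0)))
     + theta * ti * ((((w i && ~~ O i) : nat)%:R : R) - ((O i && ~~ w i) : nat)%:R))).
  apply: eq_bigr => i _; rewrite /Yimp1 /Yimp0 /Y /Yobs /c.
  by case: (w i); case: (O i) => /=; rewrite /ti /tc; ring.
rewrite big_split /= -!mulr_sumr sumrB -mulr_suml sumrB -!big_mkcond sumrB.
rewrite -!natr_sum -/(n_moved_out O w) -/(n_moved_out w O) n_moved_out_sym //.
by rewrite subrr mulr0 addr0.
Qed.

Hypotheses (nt_gt0 : (0 < nt)%N) (nc_gt0 : (0 < n - nt)%N).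

Let c_gt0 : 0 < c. Proof. by rewrite addr_gt0 // invr_gt0 ltr0n. Qed.

Lemma tau_hat_diff_theta_b theta w :
  n_ones w = n_ones O -> w != O ->
  tau theta w - tau theta O
  = c * (n_moved_out O w)%:R * (theta - theta_b Y1 Y0 O w).
Proof.
move=> eq_ones w_neq.
have m_neq0 : (n_moved_out O w)%:R != 0 :> R.
  by rewrite pnatr_eq0 -lt0n n_moved_out_gt0.
by rewrite tau_hat_diff // /theta_b -natr_sum -/(n_moved_out O w); field.
Qed.

Lemma tau_hat_eq_iff theta w :
  n_ones w = n_ones O -> w != O ->
  tau theta w = tau theta O <-> theta = theta_b Y1 Y0 O w.
Proof.
move=> eq_ones w_neq; have m_gt0 := n_moved_out_gt0 eq_ones w_neq.
have eq_diff0 : (tau theta w == tau theta O) = (theta == theta_b Y1 Y0 O w).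
  rewrite -subr_eq0 tau_hat_diff_theta_b // !mulf_eq0 (gt_eqF c_gt0).
  by rewrite pnatr_eq0 eqn0Ngt m_gt0 /= subr_eq0.
split => [/eqP | theta_eq]; first by rewrite eq_diff0 => /eqP.
by apply/eqP; rewrite eq_diff0 theta_eq.
Qed.

Lemma tau_hat_ge_iff theta w :
  n_ones w = n_ones O ->
  (tau theta O <= tau theta w) = (theta_b_ext Y1 Y0 O w <= theta%:E)%E.
Proof.
move=> eq_ones; rewrite /theta_b_ext; have [-> | w_neq] := eqVneq w O.
  by rewrite lexx leNye.
have m_gt0 := n_moved_out_gt0 eq_ones w_neq.
rewrite lee_fin -[in LHS]subr_ge0 tau_hat_diff_theta_b // pmulr_rge0 ?subr_ge0 //.
by rewrite mulr_gt0 // ltr0n.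
Qed.

Lemma pval_count (Wa : {set {ffun 'I_n -> bool}}) theta :
  {in Wa, forall w, n_ones w = n_ones O} ->
  pval nt Y O Wa theta
  = (count (fun w => theta_b_ext Y1 Y0 O w <= theta%:E)%E (enum Wa))%:R / #|Wa|%:R.
Proof.
move=> same_ones; rewrite /pval -card_set_count; congr (_%:R / _).
apply: eq_card => w; rewrite !inE; have [w_in | //] := boolP (w \in Wa).
by rewrite /= tau_hat_ge_iff ?same_ones.
Qed.

End Statistic.

Lemma ler_nat_floor (R : archiFieldType) (x : R) (m : nat) :
  0 <= x -> (m%:R <= x) = (m <= `|Num.floor x|)%N.
Proof.
move=> x_ge0; rewrite -[m%:R]/(m%:Z%:~R) -floor_ge_int -lez_nat.
by rewrite gez0_abs // floor_ge0.
Qed.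

Lemma count_le_sorted (d : Order.disp_t) (T : orderType d) (x0 t : T)
    (s : seq T) (k : nat) :
  sorted <=%O s -> (k < size s)%N ->
  (count (<=%O^~ t) s <= k)%N = (t < nth x0 s k)%O.
Proof.
move=> s_sorted k_lt.
have mono i j : (i < size s)%N -> (j < size s)%N -> (i <= j)%N ->
    (nth x0 s i <= nth x0 s j)%O.
  by move=> ? ? ?; apply: le_sorted_leq_nth.
have [t_lt | kth_le] := ltP t (nth x0 s k).
  have tail0 : count (<=%O^~ t) (drop k s) = 0%N.
    apply/eqP; rewrite -leqn0 leqNgt -has_count; apply/(has_nthP x0) => -[i].
    rewrite size_drop nth_drop ltn_subRL => i_lt le_t.
    have := le_trans (mono _ _ k_lt i_lt (leq_addr i k)) le_t.
    by rewrite leNgt t_lt.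
  rewrite -(cat_take_drop k s) count_cat tail0 addn0.
  by rewrite (leq_trans (count_size _ _)) // size_take k_lt.
apply/negbTE; rewrite -ltnNge -(cat_take_drop k.+1 s) count_cat.
have head_all : all (<=%O^~ t) (take k.+1 s).
  apply/(all_nthP x0) => i; rewrite size_takel // => i_le; rewrite nth_take //.
  exact: le_trans (mono _ _ (leq_trans i_le k_lt) k_lt i_le) kth_le.
by move: head_all; rewrite all_count => /eqP ->; rewrite size_takel // leq_addr.
Qed.

Lemma ereal_sup_lt (R : realType) (t : \bar R) : t != +oo%E ->
  ereal_sup [set x%:E | x in [set x : R | (x%:E < t)%E]] = t.
Proof.
case: t => [r | // | _]; last first.
  apply/eqP; rewrite -leeNy_eq; apply: ge_ereal_sup => _ [x /= x_lt <-].
  by move: x_lt; rewrite ltNge leNye.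
move=> _; set S := [set x%:E | x in [set x : R | (x%:E < r%:E)%E]]%classic.
have S_ub x : (x < r) -> (x%:E <= ereal_sup S)%E.
  by move=> x_lt; apply: ereal_sup_ubound; exists x => //=; rewrite lte_fin.
apply/le_anti/andP; split; first by apply: ge_ereal_sup => _ [x x_lt <-]; exact: ltW.
case E : (ereal_sup S) S_ub => [m | | ] S_ub; last 2 first.
- by rewrite leey.
- by have := S_ub (r - 1); rewrite leeNy_eq; apply; rewrite ltrBlDr ltrDl.
rewrite lee_fin leNgt; apply/negP => m_lt.
by have := S_ub ((m + r) / 2); rewrite lee_fin; lra.
Qed.


Theorem theorem1 (R : realType) (n nt : nat) (Y1 Y0 : 'I_n -> R)
  (Wa : {set {ffun 'I_n -> bool}}) (Wobs : {ffun 'I_n -> bool}) (alpha : R) :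
  (1 <= nt)%N -> (1 <= n - nt)%N ->
  (forall w, w \in Wa -> n_ones w = nt) ->
  Wobs \in Wa ->
  0 < alpha < 1 ->
  (forall Wb, Wb \in Wa -> Wb != Wobs -> forall theta : R,
     tau_hat nt (Yobs Y1 Y0 Wobs) Wobs theta Wb
       = tau_hat nt (Yobs Y1 Y0 Wobs) Wobs theta Wobs
     <-> theta = theta_b Y1 Y0 Wobs Wb)
  /\ theta_l nt (Yobs Y1 Y0 Wobs) Wobs Wa alpha
     = theta_order Y1 Y0 Wobs Wa `|Num.floor (alpha * #|Wa|%:R)|%N.
Proof.
move=> nt_gt0 nc_gt0 ones_Wa Wobs_in /andP[alpha_gt0 alpha_lt1].
have same_ones w : w \in Wa -> n_ones w = n_ones Wobs.
  by move=> w_in; rewrite !ones_Wa.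
split=> [Wb Wb_in Wb_neq theta | ]; first exact: tau_hat_eq_iff (same_ones _ Wb_in) Wb_neq.
set thetas := [seq theta_b_ext Y1 Y0 Wobs w | w <- enum Wa].
set sorted_thetas := sort <=%O thetas.
set k := `|Num.floor (alpha * #|Wa|%:R)|%N.
have Wa_gt0 : (0 < #|Wa|)%N by apply/card_gt0P; exists Wobs.
have alphaWa_ge0 : 0 <= alpha * #|Wa|%:R by rewrite mulr_ge0 // ltW.
have k_lt : (k < size sorted_thetas)%N.
  rewrite size_sort size_map -cardE -(ltr_nat R) (@le_lt_trans _ _ (alpha * #|Wa|%:R)) //.
    by rewrite ler_nat_floor.
  by rewrite gtr_pMl // ltr0n.
have perm_thetas : perm_eq sorted_thetas thetas by rewrite perm_sort.
have pval_le theta : (pval nt (Yobs Y1 Y0 Wobs) Wobs Wa theta <= alpha)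
    = (theta%:E < nth -oo%E sorted_thetas k)%E.
  rewrite pval_count // ler_pdivrMr ?ltr0n // ler_nat_floor //.
  rewrite -count_le_sorted ?sort_sorted //; last exact: le_total.
  by rewrite (permP perm_thetas) count_map.
rewrite /theta_l /theta_order -/thetas -/sorted_thetas -/k.
rewrite (_ : [set theta | _] = [set theta : R | (theta%:E < nth -oo%E sorted_thetas k)%E])%classic;
  last by apply/funext => theta; rewrite /= pval_le.
(* theta_(k+1) is some theta_b_ext, hence finite or -oo *)
apply: ereal_sup_lt.
have : nth -oo%E sorted_thetas k \in thetas by rewrite -(perm_mem perm_thetas) mem_nth.
by case/mapP => w _ ->; rewrite /theta_b_ext; case: ifP.
Qed.
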